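(* Let $\mathcal M$ be a complete, connected Riemannian manifold, let $A=(a_{ij})\in\mathbb R^{N\times K}$ have unit row sums, let $f\in\mathcal M^N$ and $p\in[1,\infty)$. Then the data term $u\mapsto \mathrm{dist}(\mathcal A(u),f)^p=\sum_{i=1}^N\mathrm{dist}(\mathcal A(u)_i,f_i)^p$ is a lower semicontinuous function on $\mathcal M^K$.
   Context: $\mathrm{dist}$ denotes the Riemannian distance on $\mathcal M$. The entries $a_{ij}$ may be negative; only $\sum_j a_{ij}=1$ for each $i$ is assumed. For $u\in\mathcal M^K$, $\mathrm{mean}(a_{i,\cdot},u)=\operatorname{argmin}_{v\in\mathcal M}\sum_{j=1}^K a_{ij}\,\mathrm{dist}(v,u_j)^2$ (set of minimizers), and $\mathcal A(u)_i$ is the set of elements of $\mathrm{mean}(a_{i,\cdot},u)$ minimizing $\mathrm{dist}(\cdot,f_i)$ over $\mathrm{mean}(a_{i,\cdot},u)$; $\mathrm{dist}(\mathcal A(u)_i,f_i)$ denotes the common distance of these points to $f_i$. *)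

From HB Require Import structures.
From mathcomp Require Import all_boot all_order all_algebra.
From mathcomp Require Import all_classical all_reals all_analysis.
Set Implicit Arguments. Unset Strict Implicit. Unset Printing Implicit Defensive.
Import Order.TTheory GRing.Theory Num.Theory.
Local Open Scope ring_scope.
Local Open Scope classical_set_scope.

(* The Riemannian manifold M is represented through its Riemannian distance
   dist : M -> M -> R.  By Hopf--Rinow, a complete connected Riemannian
   manifold is, as a metric space, a proper (Heine--Borel) length space;
   [proper_length_metric dist] records exactly these properties. *)
Definition proper_length_metric (R : realType) (M : Type) (dist : M -> M -> R) :=
  [/\ (forall x y, 0 <= dist x y) /\
      (forall x y, dist x y = 0 <-> x = y),
      (forall x y, dist x y = dist y x),
      (forall x y z, dist x z <= dist x y + dist y z),
      (forall (s : nat -> M) (x0 : M) (B : R), (forall n, dist (s n) x0 <= B) ->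
         exists (phi : nat -> nat) (x : M),
           (forall n, (phi n < phi n.+1)%N) /\
           (forall e : R, 0 < e -> exists n0 : nat, forall n : nat, (n0 <= n)%N ->
               dist (s (phi n)) x < e)) &
      (forall x y (e : R), 0 < e -> exists z,
          dist x z <= dist x y / 2 + e /\ dist z y <= dist x y / 2 + e)].

Definition mean_set (R : realType) (M : Type) (dist : M -> M -> R) (K : nat)
    (a : 'I_K -> R) (u : 'I_K -> M) : set M :=
  [set v | forall w, \sum_(j < K) a j * dist v (u j) ^+ 2
                     <= \sum_(j < K) a j * dist w (u j) ^+ 2].

Definition A_set (R : realType) (M : Type) (dist : M -> M -> R) (N K : nat)
    (A : 'M[R]_(N, K)) (f : 'I_N -> M) (u : 'I_K -> M) (i : 'I_N) : set M :=
  [set v | mean_set dist (fun j => A i j) u v /\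
           forall w, mean_set dist (fun j => A i j) u w -> dist v (f i) <= dist w (f i)].

(* dist(A(u)_i, f_i): the common distance of the points of A(u)_i to f_i *)
Definition dist_A (R : realType) (M : Type) (dist : M -> M -> R) (N K : nat)
    (A : 'M[R]_(N, K)) (f : 'I_N -> M) (u : 'I_K -> M) (i : 'I_N) : R :=
  inf [set d | exists2 v, A_set dist A f u i v & d = dist v (f i)].

Definition data_term (R : realType) (M : Type) (dist : M -> M -> R) (N K : nat)
    (A : 'M[R]_(N, K)) (f : 'I_N -> M) (p : R) (u : 'I_K -> M) : R :=
  \sum_(i < N) (dist_A dist A f u i) `^ p.

Definition lsc_prod (R : realType) (M : Type) (dist : M -> M -> R) (K : nat)
    (F : ('I_K -> M) -> R) :=
  forall (u : 'I_K -> M) (e : R), 0 < e -> exists2 delta : R, 0 < delta &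
    forall v : 'I_K -> M, (forall j, dist (v j) (u j) < delta) -> F u - e < F v.

(* Because sum_j a_ij = 1, the energy E_u(w) = sum_j a_ij dist(w, u_j)^2 grows like
   dist(w, x0)^2 / 2 even when some weights are negative, and it is jointly continuous
   in (u, w).  In a proper metric space a minimizing sequence then has a convergent
   subsequence, so mean sets and the sets A(u)_i are nonempty, and limits of means of
   u_n -> u are means of u.  Hence if u_n -> u with dist(A(u_n)_i, f_i) <= c, a cluster
   point of points of A(u_n)_i is a mean of u within c of f_i, which is lower
   semicontinuity of u |-> dist(A(u)_i, f_i); composing with the continuous
   nondecreasing t |-> t^p and summing over i preserves it. *)

From HB Require Import structures.
From mathcomp Require Import all_boot all_order all_algebra.
From mathcomp Require Import all_classical all_reals all_analysis.
From mathcomp Require Import ring lra.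
Set Implicit Arguments. Unset Strict Implicit. Unset Printing Implicit Defensive.
Import Order.TTheory GRing.Theory Num.Theory.
Import numFieldNormedType.Exports.
Local Open Scope ring_scope.
Local Open Scope classical_set_scope.

Lemma strict_incr_ge_id (phi : nat -> nat) :
  (forall n, phi n < phi n.+1)%N -> forall n, (n <= phi n)%N.
Proof. by move=> phiS; elim=> // n IHn; exact: leq_ltn_trans IHn (phiS n). Qed.

Lemma cvg_subseq (T : topologicalType) (u : nat -> T) (l : T) (phi : nat -> nat) :
  (forall n, phi n < phi n.+1)%N -> u n @[n --> \oo] --> l ->
  (u \o phi) n @[n --> \oo] --> l.
Proof.
move=> phiS; apply: cvg_comp => P [n _ Pn]; exists n => // m /= nm.
by apply: Pn; rewrite /= (leq_trans nm (strict_incr_ge_id phiS m)).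
Qed.

Section LscProd.
Variables (R : realType) (M : Type) (dist : M -> M -> R) (K : nat).

Lemma lsc_prod_cst (c : R) : lsc_prod dist (fun _ : 'I_K -> M => c).
Proof. by move=> u e e0; exists 1 => // v _; rewrite ltrBlDr ltrDl. Qed.

Lemma lsc_prod_add (F G : ('I_K -> M) -> R) :
  lsc_prod dist F -> lsc_prod dist G -> lsc_prod dist (fun u => F u + G u).
Proof.
move=> F_lsc G_lsc u e e0; have e20 : 0 < e / 2 by rewrite divr_gt0.
have [dF dF0 F_near] := F_lsc u _ e20; have [dG dG0 G_near] := G_lsc u _ e20.
exists (Num.min dF dG) => [|v vu]; first by rewrite lt_min dF0 dG0.
have vF j : dist (v j) (u j) < dF by rewrite (lt_le_trans (vu j)) // ge_min lexx.
have vG j : dist (v j) (u j) < dG by rewrite (lt_le_trans (vu j)) // ge_min lexx orbT.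
have := F_near v vF; have := G_near v vG; lra.
Qed.

Lemma lsc_prod_sum (N : nat) (F : 'I_N -> ('I_K -> M) -> R) :
  (forall i, lsc_prod dist (F i)) -> lsc_prod dist (fun u => \sum_(i < N) F i u).
Proof.
move=> F_lsc; rewrite -fct_sumE.
by apply: big_ind => // [|G H]; [exact: lsc_prod_cst | exact: lsc_prod_add].
Qed.

End LscProd.

Lemma continuous_powR (R : realType) (p y : R) :
  0 < y -> {for y, continuous (fun x : R => x `^ p)}.
Proof.
move=> y0; apply/differentiable_continuous/derivable1_diffP.
by apply: derivable_powR; rewrite in_itv /= y0.
Qed.

Lemma lsc_prod_powR (R : realType) (M : Type) (dist : M -> M -> R) (K : nat)
    (g : ('I_K -> M) -> R) (p : R) :
  0 < p -> (forall u, 0 <= g u) -> lsc_prod dist g -> lsc_prod dist (fun u => g u `^ p).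
Proof.
move=> p0 g_ge0 g_lsc u e e0.
have [gu0|gu_gt0] := eqVneq (g u) 0.
  exists 1 => // v _; rewrite gu0 powR0 ?gt_eqF // sub0r.
  by rewrite (lt_le_trans _ (powR_ge0 _ _)) ?oppr_lt0.
have {}gu_gt0 : 0 < g u by rewrite lt0r gu_gt0 g_ge0.
have /cvgr_dist_lt /(_ e e0) /nbhs_ballP [eta eta0 powR_near] :=
  continuous_powR (p := p) gu_gt0.
have [delta delta0 g_near] := g_lsc u eta eta0.
exists delta => // v /g_near gv_near.
have [gu_le|gv_lt] := leP (g u) (g v).
  have := ge0_ler_powR (ltW p0) (g_ge0 u) (g_ge0 v) gu_le; lra.
have : `|g u `^ p - g v `^ p| < e.
  by apply: powR_near; rewrite /ball /= ger0_norm ?subr_ge0 ?(ltW gv_lt) //; lra.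
rewrite ltr_norml; lra.
Qed.

Section ProperMetric.
Variables (R : realType) (M : Type) (dist : M -> M -> R).
Hypothesis hdist : proper_length_metric dist.

Lemma dist_ge0 x y : 0 <= dist x y.
Proof. by case: hdist => -[]. Qed.

Lemma distxx x : dist x x = 0.
Proof. by case: hdist => -[_ dist0] *; apply/dist0. Qed.

Lemma distC x y : dist x y = dist y x.
Proof. by case: hdist. Qed.

Lemma dist_triangle x y z : dist x z <= dist x y + dist y z.
Proof. by case: hdist. Qed.

Lemma dist_lipschitz x y x' y' : `|dist x y - dist x' y'| <= dist x x' + dist y y'.
Proof.
have := dist_triangle x x' y; have := dist_triangle x' y' y.
have := dist_triangle x' x y'; have := dist_triangle x y y'.
rewrite ler_norml (distC y' y) (distC x' x); lra.
Qed.

Lemma sqr_distB_le w y x0 :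
  `|dist w y ^+ 2 - dist w x0 ^+ 2| <= dist y x0 * (2 * dist w x0 + dist y x0).
Proof.
have := dist_lipschitz w y w x0; rewrite distxx add0r ler_norml => /andP[].
have := dist_ge0 w y; have := dist_ge0 w x0; rewrite ler_norml; nra.
Qed.

Definition dist_cvg (s : nat -> M) (x : M) := dist (s n) x @[n --> \oo] --> (0 : R).

Lemma dist_cvg_subseq (s : nat -> M) (x : M) (phi : nat -> nat) :
  (forall n, phi n < phi n.+1)%N -> dist_cvg s x -> dist_cvg (s \o phi) x.
Proof. exact: cvg_subseq. Qed.

Lemma dist_cvg_cst x : dist_cvg (fun=> x) x.
Proof. by rewrite /dist_cvg distxx; exact: cvg_cst. Qed.

Lemma cvg_dist s t x y : dist_cvg s x -> dist_cvg t y ->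
  dist (s n) (t n) @[n --> \oo] --> dist x y.
Proof.
move=> sx ty; apply/subr_cvg0; apply: norm_cvg0.
apply: (@squeeze_cvgr _ _ _ _ (cst 0) (fun n => dist (s n) x + dist (t n) y)).
- by near=> n; rewrite normr_ge0 /= dist_lipschitz.
- exact: cvg_cst.
- by rewrite -[0]addr0; exact: cvgD.
Unshelve. all: end_near. Qed.

Lemma dist_cvg_harmonic (s : nat -> M) (x : M) :
  (forall n, dist (s n) x < harmonic n) -> dist_cvg s x.
Proof.
move=> sx; apply: (@squeeze_cvgr _ _ _ _ (cst 0) harmonic _ _ _ (cvg_cst 0) cvg_harmonic).
by apply: nearW => n; rewrite dist_ge0 ltW.
Qed.

Lemma bounded_cvg_subseq (s : nat -> M) (x0 : M) (B : R) :
  (forall n, dist (s n) x0 <= B) ->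
  exists (phi : nat -> nat) (x : M),
    (forall n, phi n < phi n.+1)%N /\ dist_cvg (s \o phi) x.
Proof.
move=> sB; case: hdist => _ _ _ /(_ s x0 B sB) [phi [x [phiS sx]]] _.
exists phi, x; split => //; apply/cvgrPdist_lt => e /sx [n0 n0e].
by exists n0 => // n /n0e; rewrite sub0r normrN ger0_norm ?dist_ge0.
Qed.

Lemma exists_minimizer (P : set M) (phi : M -> R) (x0 : M) :
  (exists z, P z) -> (exists lb, forall w, P w -> lb <= phi w) ->
  (forall m, exists B, forall w, P w -> phi w <= m -> dist w x0 <= B) ->
  (forall s w, (forall n, P (s n)) -> dist_cvg s w -> P w) ->
  (forall s w, dist_cvg s w -> phi (s n) @[n --> \oo] --> phi w) ->
  exists2 w, P w & forall z, P z -> phi w <= phi z.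
Proof.
move=> [z0 Pz0] [lb lbP] sublevelB Pclosed phi_cvg.
have infE : has_inf (phi @` P).
  by split; [exists (phi z0), z0 | exists lb => _ [w Pw <-]; exact: lbP].
set m := inf (phi @` P).
have m_le z : P z -> m <= phi z by move=> Pz; apply: (ge_inf infE.2); exists z.
have /choice [s sP] : forall n, exists w, P w /\ phi w < m + harmonic n.
  by move=> n; have [_ [w Pw <-] ?] := inf_adherent (harmonic_gt0 n) infE; exists w.
have [B sB] := sublevelB (m + 1).
have s_bd n : dist (s n) x0 <= B.
  apply: sB (sP n).1 _.
  by rewrite (le_trans (ltW (sP n).2)) // lerD2l invf_le1 // ler1n.
have [psi [w [psiS sw]]] := bounded_cvg_subseq s_bd.
exists w; first exact: (Pclosed _ _ (fun n => (sP (psi n)).1) sw).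
move=> z Pz; apply: le_trans (m_le z Pz).
rewrite -[m]addr0.
apply: (ler_cvg_to (phi_cvg _ _ sw) (cvgD (cvg_cst m) (cvg_subseq psiS cvg_harmonic))).
by apply: nearW => n; exact: ltW (sP (psi n)).2.
Qed.

Section Energy.
Variables (K : nat) (a : 'I_K -> R).
Hypothesis a_sum1 : \sum_(j < K) a j = 1.

Definition energy (x : 'I_K -> M) (w : M) : R := \sum_(j < K) a j * dist w (x j) ^+ 2.

Lemma cvg_energy (xs : nat -> 'I_K -> M) (x : 'I_K -> M) (ws : nat -> M) (w : M) :
  (forall j, dist_cvg (xs^~ j) (x j)) -> dist_cvg ws w ->
  energy (xs n) (ws n) @[n --> \oo] --> energy x w.
Proof.
move=> xsx wsw; apply: cvg_big => [|j _]; first exact: add_continuous.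
have dist_j := cvg_dist wsw (xsx j).
by apply: cvgM; [exact: cvg_cst | exact: cvgM].
Qed.

Lemma energy_coercive (x : 'I_K -> M) (x0 : M) :
  exists C, forall w, dist w x0 ^+ 2 / 2 - C <= energy x w.
Proof.
set S := \sum_(j < K) `|a j| * dist (x j) x0.
set T := \sum_(j < K) `|a j| * dist (x j) x0 ^+ 2.
exists (2 * S ^+ 2 + T) => w; set d := dist w x0.
have : d ^+ 2 - (2 * d * S + T) <= energy x w.
  have -> : d ^+ 2 - (2 * d * S + T) =
      \sum_(j < K) (a j * d ^+ 2 - `|a j| * (dist (x j) x0 * (2 * d + dist (x j) x0))).
    rewrite sumrB -mulr_suml a_sum1 mul1r mulr_sumr -big_split /=.
    by congr (_ - _); apply: eq_bigr => j _; ring.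
  apply: ler_sum => j _.
  have := ler_norm (a j * (d ^+ 2 - dist w (x j) ^+ 2)).
  rewrite normrM distrC; have := normr_ge0 (a j).
  have := sqr_distB_le w (x j) x0; rewrite -/d; nra.
have := sqr_ge0 (d - 2 * S); lra.
Qed.

Lemma mean_set_nonempty (x : 'I_K -> M) (x0 : M) : exists w, mean_set dist a x w.
Proof.
have [C coercive] := energy_coercive x x0.
suff [w _ w_min] : exists2 w, setT w & forall z, setT z -> energy x w <= energy x z.
  by exists w => z; exact: w_min.
apply: (@exists_minimizer _ _ x0).
- by exists x0.
- by exists (- C) => w _; have := coercive w; have := sqr_ge0 (dist w x0); lra.
- move=> m; exists (m + C + 1) => w _ wm; have := coercive w.
  have := sqr_ge0 (dist w x0 - 1); lra.
- by [].
- by move=> s w sw; apply: cvg_energy sw => j; exact: dist_cvg_cst.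
Qed.

Lemma mean_set_limit (xs : nat -> 'I_K -> M) (x : 'I_K -> M) (ws : nat -> M) (w : M) :
  (forall j, dist_cvg (xs^~ j) (x j)) -> dist_cvg ws w ->
  (forall n, mean_set dist a (xs n) (ws n)) -> mean_set dist a x w.
Proof.
move=> xsx wsw ws_mean z.
apply: (ler_cvg_to (cvg_energy xsx wsw) (cvg_energy xsx (dist_cvg_cst z))).
by apply: nearW => n; exact: ws_mean.
Qed.

End Energy.

Section DataTerm.
Variables (N K : nat) (A : 'M[R]_(N, K)) (f : 'I_N -> M).
Hypothesis rows_sum1 : forall i, \sum_(j < K) A i j = 1.

Lemma A_set_nonempty (u : 'I_K -> M) (i : 'I_N) : exists w, A_set dist A f u i w.
Proof.
suff [w w_mean w_min] : exists2 w, mean_set dist (A i) u w &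
    forall z, mean_set dist (A i) u z -> dist w (f i) <= dist z (f i).
  by exists w.
apply: (@exists_minimizer _ _ (f i)).
- exact: mean_set_nonempty (rows_sum1 i) u (f i).
- by exists 0 => w _; exact: dist_ge0.
- by move=> m; exists m.
- move=> s w s_mean sw; apply: mean_set_limit sw s_mean => j; exact: dist_cvg_cst.
- by move=> s w sw; apply: cvg_dist sw (dist_cvg_cst _).
Qed.

Lemma dist_A_eq (u : 'I_K -> M) (i : 'I_N) (w : M) :
  A_set dist A f u i w -> dist_A dist A f u i = dist w (f i).
Proof.
move=> [w_mean w_min]; rewrite /dist_A.
suff -> : [set d | exists2 v, A_set dist A f u i v & d = dist v (f i)] =
    [set dist w (f i)].
  exact: inf1.
apply/seteqP; split => d /=; last by move=> ->; exists w.
by move=> [v [v_mean v_min] ->]; apply/le_anti; rewrite v_min //= w_min.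
Qed.

Lemma dist_A_ge0 (u : 'I_K -> M) (i : 'I_N) : 0 <= dist_A dist A f u i.
Proof. by have [w /dist_A_eq ->] := A_set_nonempty u i; exact: dist_ge0. Qed.

Lemma dist_A_lsc (i : 'I_N) : lsc_prod dist (fun u => dist_A dist A f u i).
Proof.
move=> u e e0; apply: contrapT => not_lsc.
have /choice [vs vs_bad] : forall n, exists v : 'I_K -> M,
    (forall j, dist (v j) (u j) < harmonic n) /\
    dist_A dist A f v i <= dist_A dist A f u i - e.
  move=> n; apply: contrapT => hn; apply: not_lsc.
  exists (harmonic n) => [|v vu]; first exact: harmonic_gt0.
  by rewrite ltNge; apply/negP => hle; apply: hn; exists v.
have /choice [ws wsA] := fun n => A_set_nonempty (vs n) i.
have ws_bd n : dist (ws n) (f i) <= dist_A dist A f u i - e.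
  by rewrite -(dist_A_eq (wsA n)); exact: (vs_bad n).2.
have [psi [w [psiS wsw]]] := bounded_cvg_subseq ws_bd.
have w_mean : mean_set dist (A i) u w.
  apply: (mean_set_limit (xs := vs \o psi) _ wsw) => [j | n]; last exact: (wsA (psi n)).1.
  apply: (dist_cvg_subseq (s := vs^~ j)) psiS _.
  by apply: dist_cvg_harmonic => n; exact: (vs_bad n).1.
have w_bd : dist w (f i) <= dist_A dist A f u i - e.
  apply: (ler_cvg_to (cvg_dist wsw (dist_cvg_cst (f i))) (cvg_cst _)).
  by apply: nearW => n; exact: ws_bd.
have [wu wuA] := A_set_nonempty u i.
have := wuA.2 w w_mean; rewrite -(dist_A_eq wuA); lra.
Qed.

End DataTerm.

End ProperMetric.

Theorem lemma3p3 (R : realType) (M : Type) (dist : M -> M -> R)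
    (N K : nat) (A : 'M[R]_(N, K)) (f : 'I_N -> M) (p : R) :
  proper_length_metric dist ->
  (forall i : 'I_N, \sum_(j < K) A i j = 1) ->
  1 <= p ->
  lsc_prod dist (data_term dist A f p).
Proof.
move=> hdist rows_sum1 p_ge1; apply: lsc_prod_sum => i.
apply: lsc_prod_powR.
- exact: lt_le_trans ltr01 p_ge1.
- by move=> u; apply: (dist_A_ge0 hdist).
- by apply: (dist_A_lsc hdist).
Qed.
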